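(* Let $p \ge 1$, let $\mathcal{Y}=\{1,\dots,C\}$, and let $f:\mathbb{R}^d\to\mathcal{Y}$ be a base classifier written as a composition $f = f_{\mathrm{R}}\circ f_{\mathrm{L}}$ with $f_{\mathrm{L}}:\mathbb{R}^d\to\mathbb{R}^m$ and $f_{\mathrm{R}}:\mathbb{R}^m\to\mathcal{Y}$. Fix $\sigma>0$ and define the SPLITZ classifier $$g_{\mathrm{SPLITZ}}(x)=\arg\max_{c\in\mathcal{Y}}\ \mathbb{P}_{\delta\sim\mathcal{N}(0,\sigma^2 I)}\big(f_{\mathrm{R}}(f_{\mathrm{L}}(x)+\delta)=c\big),$$ and the smoothed right half $\tilde g(u)=\arg\max_{c\in\mathcal{Y}}\mathbb{P}_{\delta\sim\mathcal{N}(0,\sigma^2 I)}\big(f_{\mathrm{R}}(u+\delta)=c\big)$, so that $g_{\mathrm{SPLITZ}}=\tilde g\circ f_{\mathrm{L}}$. For an input $x$, let $L^{(\gamma)}_{f_{\mathrm{L}}}(x)$ denote the $\gamma$-local Lipschitz constant of $f_{\mathrm{L}}$ at $x$, and let $R_{f_{\mathrm{R}}}(f_{\mathrm{L}}(x))$ denote a certified radius of $f_{\mathrm{R}}$ at the input $f_{\mathrm{L}}(x)$ holding with probability at least $1-\alpha$, i.e. with probability at least $1-\alpha$, $\tilde g(u')=\tilde g(f_{\mathrm{L}}(x))$ for all $u'$ with $\|u'-f_{\mathrm{L}}(x)\|_p\le R_{f_{\mathrm{R}}}(f_{\mathrm{L}}(x))$. Then for any input $x$, with probability at least $1-\alpha$,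 $g_{\mathrm{SPLITZ}}$ has a certified radius at $x$ of at least $$R_{g_{\mathrm{SPLITZ}}}(x)=\max_{\gamma\ge 0}\ \min\left\{\frac{R_{f_{\mathrm{R}}}(f_{\mathrm{L}}(x))}{L^{(\gamma)}_{f_{\mathrm{L}}}(x)},\ \gamma\right\},$$ that is, $g_{\mathrm{SPLITZ}}(x')=g_{\mathrm{SPLITZ}}(x)$ for all $x'$ with $\|x'-x\|_p\le R_{g_{\mathrm{SPLITZ}}}(x)$.
   Context: For a function $h$ with domain in $\mathbb{R}^d$ and vector-valued output, the $\gamma$-local Lipschitz constant of $h$ at $x$ (with respect to the $\ell_p$ norm) is $L^{(\gamma)}_h(x)=\sup_{y\in B(x,\gamma),\,y\neq x}\frac{\|h(y)-h(x)\|_p}{\|y-x\|_p}$, where $B(x,\gamma)=\{u:\|u-x\|_p\le\gamma\}$. A classifier $g$ has certified radius $R$ at $x$ (with probability at least $1-\alpha$, the probability being over the randomness of the classifier) if, with that probability, $g(x')=g(x)$ for all $x'=x+\delta$ with $\|\delta\|_p\le R$. When the noise is Gaussian, the radius of the smoothed right half can be taken as the randomized-smoothing radius $\frac{\sigma}{2}\big(\Phi^{-1}(\underline{p_A})-\Phi^{-1}(\overline{p_B})\big)$, where $\underline{p_A}$ lower-bounds the probability of the top class and $\overline{p_B}$ upper-bounds the probability of the runner-up class, and $\Phi$ is the standard normal CDF. *)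

From HB Require Import structures.
From mathcomp Require Import all_boot all_order all_algebra.
From mathcomp Require Import all_classical all_reals all_analysis.
Set Implicit Arguments. Unset Strict Implicit. Unset Printing Implicit Defensive.
Import Order.TTheory GRing.Theory Num.Theory.
Local Open Scope classical_set_scope.
Local Open Scope ring_scope.

Section Defs.
Variable R : realType.

Definition lp_norm (p : R) (n : nat) (v : 'rV[R]_n) : R :=
  (\sum_(i < n) `|v ord0 i| `^ p) `^ (p^-1).

Definition lp_ball (p : R) (n : nat) (x : 'rV[R]_n) (r : R) : set 'rV[R]_n :=
  [set y | lp_norm p (y - x) <= r].

(* gamma-local Lipschitz constant of h at x w.r.t. l_p (value in [-oo,+oo];
   the supremum of the empty set, e.g. for gamma = 0, is -oo) *)
Definition local_lip (p : R) (d m : nat) (h : 'rV[R]_d -> 'rV[R]_m)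
  (gamma : R) (x : 'rV[R]_d) : \bar R :=
  ereal_sup [set ((lp_norm p (h y - h x)) / (lp_norm p (y - x)))%:E
            | y in [set y | lp_ball p x gamma y /\ y <> x]].

(* R / L with the conventions R / L = +oo when L <= 0 (no positive slope:
   h is constant on the ball) and R / (+oo) = 0 *)
Definition ratio_lip (r : R) (L : \bar R) : \bar R :=
  match L with
  | +oo%E => 0%E
  | -oo%E => +oo%E
  | l%:E => if l <= 0 then +oo%E else (r / l)%:E
  end.

Definition splitz_radius_at (p : R) (d m : nat) (fL : 'rV[R]_d -> 'rV[R]_m)
  (x : 'rV[R]_d) (RfR : R) (gamma : R) : \bar R :=
  Order.min (ratio_lip RfR (local_lip p fL gamma x)) gamma%:E.

Definition is_max_of (S : set (\bar R)) (r : \bar R) : Prop :=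
  S r /\ forall s, S s -> (s <= r)%E.

End Defs.

Definition vecR (R : realType) (m : nat) := 'rV[R]_m.
HB.instance Definition _ (R : realType) (m : nat) := Choice.on (vecR R m).
HB.instance Definition _ (R : realType) (m : nat) :=
  isPointed.Build (vecR R m) 0%R.

(* measurable structure on R^m generated by measurable boxes
   (i.e. the product Borel sigma-algebra) *)
Definition boxes (R : realType) (m : nat) : set (set (vecR R m)) :=
  [set B | exists A : 'I_m -> set R,
     (forall i, measurable (A i)) /\ B = [set v : vecR R m | forall i, A i (v ord0 i)]].

Notation Rvec R m := (g_sigma_algebraType (@boxes R m)).

Section Defs2.
Variable R : realType.

(* P is the isotropic Gaussian N(0, sigma^2 I_m) on R^m: on boxes it is the
   product of one-dimensional N(0, sigma^2) laws (this determines it) *)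
Definition is_iso_gaussian (m : nat) (sigma : R)
  (P : probability (Rvec R m) R) : Prop :=
  forall A : 'I_m -> set R, (forall i, measurable (A i)) ->
    P [set v : vecR R m | forall i, A i (v ord0 i)]
    = (\prod_(i < m) normal_prob 0 sigma (A i))%E.

Definition smoothed (m C : nat) (hC : (0 < C)%N) (P : probability (Rvec R m) R)
  (fR : 'rV[R]_m -> 'I_C) (u : 'rV[R]_m) : 'I_C :=
  Order.arg_max (Ordinal hC) xpredT
    (fun c : 'I_C => P [set delta : vecR R m | fR (u + delta) = c]).

Definition g_splitz (d m C : nat) (hC : (0 < C)%N) (P : probability (Rvec R m) R)
  (fL : 'rV[R]_d -> 'rV[R]_m) (fR : 'rV[R]_m -> 'I_C) (x : 'rV[R]_d) : 'I_C :=
  Order.arg_max (Ordinal hC) xpredT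
    (fun c : 'I_C => P [set delta : vecR R m | fR (fL x + delta) = c]).

Definition whp {dO} (Omega : measurableType dO) (Q : probability Omega R)
  (alpha : R) (E : Omega -> Prop) : Prop :=
  exists A : set Omega, measurable A /\ ((1 - alpha)%:E <= Q A)%E /\
    (forall w, A w -> E w).

End Defs2.

(* The certificate of f_R at f_L x transfers to g_SPLITZ = g~ o f_L: if
   |x' - x| <= min (R / L, gamma), then x' lies in the gamma-ball where L
   bounds the slope of f_L, so |f_L x' - f_L x| <= L |x' - x| <= R and
   g~ (f_L x') = g~ (f_L x).  When L <= 0 the map f_L is constant on that
   ball and there is nothing to certify.  No property of the noise is used:
   the probability only comes from the certificate of f_R. *)
From HB Require Import structures.
From mathcomp Require Import all_boot all_order all_algebra.
From mathcomp Require Import all_classical all_reals all_analysis.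
Import Order.TTheory GRing.Theory Num.Theory.
Local Open Scope classical_set_scope.
Local Open Scope ring_scope.

Section LpNorm.
Variables (R : realType) (p : R) (n : nat).

Lemma lp_norm_ge0 (v : 'rV[R]_n) : 0 <= lp_norm p v.
Proof. exact: powR_ge0. Qed.

Lemma lp_norm_eq0 (v : 'rV[R]_n) : lp_norm p v = 0 -> v = 0.
Proof.
move=> /powR_eq0_eq0 /(psumr_eq0P (fun i _ => powR_ge0 _ _)) sum0.
apply/rowP => i; rewrite mxE.
by have /powR_eq0_eq0/normr0_eq0 := sum0 i isT.
Qed.

Lemma lp_norm_gt0 (v : 'rV[R]_n) : v != 0 -> 0 < lp_norm p v.
Proof.
move=> v0; rewrite lt_def lp_norm_ge0 andbT.
by apply: contra v0 => /eqP/lp_norm_eq0 ->.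
Qed.

End LpNorm.

Arguments lp_norm_ge0 {R p n} v.
Arguments lp_norm_eq0 {R p n v}.
Arguments lp_norm_gt0 {R} p {n v}.

Lemma local_lip_ge {R : realType} {p gamma : R} {d m : nat}
    (h : 'rV[R]_d -> 'rV[R]_m) {x y : 'rV[R]_d} :
  lp_norm p (y - x) <= gamma -> y != x ->
  ((lp_norm p (h y - h x) / lp_norm p (y - x))%:E <= local_lip p h gamma x)%E.
Proof. by move=> yx yNx; apply: ereal_sup_ubound; exists y => //; split => //; apply/eqP. Qed.

(* [a] and [b] play the roles of |h y - h x| and |y - x|. *)
Lemma le_ratio_lip {R : realType} (r : R) {a b : R} {L : \bar R} :
  0 <= a -> 0 < b -> ((a / b)%:E <= L)%E -> (b%:E <= ratio_lip r L)%E ->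
  a = 0 \/ a <= r.
Proof.
move=> a0 b0; case: L => [l| |] /=; last by rewrite leeNy_eq.
- rewrite lee_fin; case: ifPn => [l0 abl _ | ].
    left; apply/le_anti; rewrite a0 andbT.
    by rewrite -(divfK (lt0r_neq0 b0) a) pmulr_lle0 // (le_trans abl).
  rewrite -ltNge => l0 abl; rewrite lee_fin ler_pdivlMr // => blr; right.
  by rewrite ler_pdivrMr // in abl; rewrite (le_trans abl) // mulrC.
- by move=> _; rewrite lee_fin leNgt b0.
Qed.

Lemma splitz_radius_at_sound {R : realType} {p : R} {d m : nat}
    {fL : 'rV[R]_d -> 'rV[R]_m} {x x' : 'rV[R]_d} {r gamma : R} :
  ((lp_norm p (x' - x))%:E <= splitz_radius_at p fL x r gamma)%E ->
  fL x' = fL x \/ lp_norm p (fL x' - fL x) <= r.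
Proof.
have [-> _|x'Nx] := eqVneq x' x; first by left.
rewrite le_min lee_fin => /andP[le_ratio le_gamma].
have dx_gt0 : 0 < lp_norm p (x' - x) by apply: lp_norm_gt0; rewrite subr_eq0.
case: (le_ratio_lip r (lp_norm_ge0 _) dx_gt0 (local_lip_ge fL le_gamma x'Nx) le_ratio).
- by move/lp_norm_eq0/eqP; rewrite subr_eq0 => /eqP; left.
- by right.
Qed.

Lemma g_splitzE {R : realType} (d m C : nat) (hC : (0 < C)%N)
    (P : probability (Rvec R m) R) (fL : 'rV[R]_d -> 'rV[R]_m)
    (fR : 'rV[R]_m -> 'I_C) (x : 'rV[R]_d) :
  g_splitz hC P fL fR x = smoothed hC P fR (fL x).
Proof. by []. Qed.

Lemma whpW {R : realType} (dO : measure_display) (Omega : measurableType dO)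
    (Q : probability Omega R) (alpha : R) (E F : Omega -> Prop) :
  (forall w, E w -> F w) -> whp Q alpha E -> whp Q alpha F.
Proof. by move=> EF [A [mA [QA AE]]]; exists A; do 2 split => //; move=> w /AE/EF. Qed.

Theorem theorem1 (R : realType) (p : R) (d m C : nat) (hC : (0 < C)%N)
  (fL : 'rV[R]_d -> 'rV[R]_m) (fR : 'rV[R]_m -> 'I_C)
  (sigma : R) (P : probability (Rvec R m) R)
  (dO : measure_display) (Omega : measurableType dO) (Q : probability Omega R)
  (alpha : R) (RfR : Omega -> R) (x : 'rV[R]_d) :
  1 <= p -> 0 < sigma -> is_iso_gaussian sigma P ->
  whp Q alpha (fun w => forall u' : 'rV[R]_m,
      lp_norm p (u' - fL x) <= RfR w ->
      smoothed hC P fR u' = smoothed hC P fR (fL x)) ->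
  whp Q alpha (fun w => forall r : \bar R,
      is_max_of [set splitz_radius_at p fL x (RfR w) gamma | gamma in [set gamma | 0 <= gamma]] r ->
      forall x' : 'rV[R]_d, ((lp_norm p (x' - x))%:E <= r)%E ->
      g_splitz hC P fL fR x' = g_splitz hC P fL fR x).
Proof.
move=> _ _ _; apply: whpW => w certR r [[gamma _ <-] _] x' x'_in.
rewrite !g_splitzE.
by case: (splitz_radius_at_sound x'_in) => [->|/certR].
Qed.
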